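(* For each $n$, let $G=(V,E)$ be the complete graph on $V=\{1,\ldots,n\}$ and let $b(\mathbf x)=\sum_{ij\in E}a_{ij}x_ix_j$, where the coefficients $a_{ij}$ are chosen independently and uniformly at random from $\{1,-1\}$. For $\mathbf x=(1/2,1/2,\ldots,1/2)$ we have \[\lim_{n\to\infty}\Pr\left[\operatorname{mcgap}[b](\mathbf x)\geqslant\frac{\sqrt n}{4}\operatorname{chgap}[b](\mathbf x)\right]=1.\]
   Context: Let $G=(V,E)$ be an undirected graph with $V=\{1,\ldots,n\}$; write $ij$ for the edge $\{i,j\}$. A bilinear function is $b:[0,1]^n\to\mathbb R$, $b(\mathbf x)=\sum_{ij\in E}a_{ij}x_ix_j$ with real coefficients $a_{ij}$. Its graph is $B=\{(\mathbf x,z)\in[0,1]^n\times\mathbb R: z=b(\mathbf x)\}$, and $\operatorname{conv}(B)$ is its convex hull. The McCormick polytopes are $P=\{(\mathbf x,\mathbf y)\in[0,1]^n\times[0,1]^{|E|}: y_{ij}\le x_i,\ y_{ij}\le x_j,\ y_{ij}\ge x_i+x_j-1\ \forall ij\in E\}$ and $Q=\{(\mathbf x,z)\in[0,1]^n\times\mathbb R:\exists\mathbf y\in[0,1]^{|E|}\text{ with }(\mathbf x,\mathbf y)\in P,\ z=\sum_{ij\in E}a_{ij}y_{ij}\}$. Define for $\mathbf x\in[0,1]^n$: $\operatorname{cav}[b](\mathbf x)=\max\{z:(\mathbf x,z)\in\operatorname{conv}(B)\}$, $\operatorname{vex}[b](\mathbf x)=\min\{z:(\mathbf x,z)\in\operatorname{conv}(B)\}$,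 $\operatorname{mcu}[b](\mathbf x)=\max\{z:(\mathbf x,z)\in Q\}$, $\operatorname{mcl}[b](\mathbf x)=\min\{z:(\mathbf x,z)\in Q\}$, the convex hull gap $\operatorname{chgap}[b]=\operatorname{cav}[b]-\operatorname{vex}[b]$ and the McCormick gap $\operatorname{mcgap}[b]=\operatorname{mcu}[b]-\operatorname{mcl}[b]$. *)

From Stdlib Require Import Reals ClassicalEpsilon.
From Stdlib Require List.
From mathcomp Require Import all_boot.

Set Implicit Arguments. Unset Strict Implicit. Unset Printing Implicit Defensive.

Open Scope R_scope.

(* Vertices are 'I_n (standing for 1..n); edges of the complete graph K_n are
   pairs (i,j) with i < j. *)
Notation edge n := {p : 'I_n * 'I_n | (p.1 < p.2)%N}.

Definition signs (n : nat) := {ffun edge n -> bool}.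

Definition coef (n : nat) (s : signs n) (e : edge n) : R :=
  if s e then 1 else -1.

Definition Rsum (T : Type) (l : seq T) (f : T -> R) : R :=
  foldr (fun t acc => f t + acc) 0 l.

Definition bil (n : nat) (s : signs n) (x : 'I_n -> R) : R :=
  Rsum (enum {: edge n}) (fun e => coef s e * x (val e).1 * x (val e).2).

Definition inbox (n : nat) (x : 'I_n -> R) : Prop := forall i, 0 <= x i <= 1.

(* (x,z) in conv(B): finite convex combination of points of the graph B. *)
Definition in_convB (n : nat) (s : signs n) (x : 'I_n -> R) (z : R) : Prop :=
  exists l : seq (R * ('I_n -> R)),
    List.Forall (fun p => 0 <= fst p /\ inbox (snd p)) l /\
    Rsum l fst = 1 /\
    (forall i, x i = Rsum l (fun p => fst p * snd p i)) /\
    z = Rsum l (fun p => fst p * bil s (snd p)).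

(* (x,z) in Q, the McCormick relaxation projected to (x,z). *)
Definition in_Q (n : nat) (s : signs n) (x : 'I_n -> R) (z : R) : Prop :=
  inbox x /\
  exists y : edge n -> R,
    (forall e, 0 <= y e <= 1 /\ y e <= x (val e).1 /\ y e <= x (val e).2 /\
               x (val e).1 + x (val e).2 - 1 <= y e) /\
    z = Rsum (enum {: edge n}) (fun e => coef s e * y e).

Definition Rmax_of (S : R -> Prop) : R :=
  epsilon (inhabits 0) (fun v => S v /\ forall z, S z -> z <= v).
Definition Rmin_of (S : R -> Prop) : R :=
  epsilon (inhabits 0) (fun v => S v /\ forall z, S z -> v <= z).

Definition cav (n : nat) (s : signs n) (x : 'I_n -> R) : R := Rmax_of (in_convB s x).
Definition vex (n : nat) (s : signs n) (x : 'I_n -> R) : R := Rmin_of (in_convB s x).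
Definition mcu (n : nat) (s : signs n) (x : 'I_n -> R) : R := Rmax_of (in_Q s x).
Definition mcl (n : nat) (s : signs n) (x : 'I_n -> R) : R := Rmin_of (in_Q s x).

Definition chgap (n : nat) (s : signs n) (x : 'I_n -> R) : R := cav s x - vex s x.
Definition mcgap (n : nat) (s : signs n) (x : 'I_n -> R) : R := mcu s x - mcl s x.

Definition pbool (P : Prop) : bool :=
  if excluded_middle_informative P then true else false.

Definition prob (n : nat) (P : signs n -> Prop) : R :=
  INR #|[set s : signs n | pbool (P s)]| / INR #|{: signs n}|.

Set Warnings "-notation-overridden -redundant-canonical-projection".
From HB Require Import structures.
From Stdlib Require Import Reals Lra ClassicalEpsilon FunctionalExtensionality.
From mathcomp Require Import all_boot.

Set Implicit Arguments. Unset Strict Implicit.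
Open Scope R_scope.

(* At the centre x = (1/2, ..., 1/2) every McCormick variable y_ij ranges over
   [0, 1/2], so mcgap = |E|/2.  Writing points of the box as 1/2 + d, one has
   b(1/2 + d) = b(1/2) + L(d) + b(d) with L linear; L averages out over any
   convex combination representing the centre, and b is affine in each
   coordinate, so its extrema over the cube |d_i| <= 1/2 sit at vertices
   d = +-1/2, which the symmetric pairs 1/2 +- d realise.  Hence chgap is the
   spread of b over the vertices d_u (u a 2-colouring of V), and
   b(d_u) = (2 A_u - |E|) / 4 where A_u ~ Bin(|E|, 1/2) counts the edges whose
   sign agrees with the cut of u.  A Chernoff bound and a union bound over the
   2^(n+1) patterns make |b(d_u)| <= |E| / sqrt n for all u, except with
   probability O((2 e^(-6/7))^n); on that event chgap <= (4 / sqrt n) mcgap. *)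

(** * Finite sums of reals *)

Lemma Rplus_assoc' : associative Rplus. Proof. by move=> x y z; rewrite Rplus_assoc. Qed.
Lemma Rmult_assoc' : associative Rmult. Proof. by move=> x y z; rewrite Rmult_assoc. Qed.
HB.instance Definition _ := Monoid.isComLaw.Build R 0 Rplus Rplus_assoc' Rplus_comm Rplus_0_l.
HB.instance Definition _ := Monoid.isComLaw.Build R 1 Rmult Rmult_assoc' Rmult_comm Rmult_1_l.
HB.instance Definition _ := Monoid.isMulLaw.Build R 0 Rmult Rmult_0_l Rmult_0_r.
HB.instance Definition _ :=
  Monoid.isAddLaw.Build R Rmult Rplus Rmult_plus_distr_r Rmult_plus_distr_l.

Lemma Rsum_enum (T : finType) (f : T -> R) :
  Rsum (enum {: T}) f = \big[Rplus/0]_(t : T) f t.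
Proof.
rewrite -big_enum; elim: (enum T) => [|t l IH]; by rewrite ?big_nil ?big_cons //= IH.
Qed.

Lemma Rsum_add (T : Type) (l : seq T) f g :
  Rsum l (fun t => f t + g t) = Rsum l f + Rsum l g.
Proof. elim: l => [|t l IH] /=; lra. Qed.

Lemma Rsum_mulr (T : Type) (l : seq T) f c :
  Rsum l (fun t => f t * c) = Rsum l f * c.
Proof. elim: l => [|t l IH] /=; [lra | rewrite IH; ring]. Qed.

Lemma eq_Rsum (T : Type) (l : seq T) f g :
  (forall t, f t = g t) -> Rsum l f = Rsum l g.
Proof. by move=> fg; elim: l => [|t l IH] //=; rewrite fg IH. Qed.

Lemma ler_Rsum_Forall (T : Type) (P : T -> Prop) (l : seq T) f g :
  List.Forall P l -> (forall t, P t -> f t <= g t) -> Rsum l f <= Rsum l g.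
Proof. move=> Pl fg; elim: Pl => [|t l' Pt _ IH] /=; [lra | have := fg t Pt; lra]. Qed.

Lemma ler_big (I : Type) (r : seq I) (P : pred I) (F G : I -> R) :
  (forall i, P i -> F i <= G i) ->
  \big[Rplus/0]_(i <- r | P i) F i <= \big[Rplus/0]_(i <- r | P i) G i.
Proof. by move=> FG; apply: (big_ind2 (fun a b => a <= b)) => //; [lra | move=> *; lra]. Qed.

Lemma big_ge0 (I : Type) (r : seq I) (P : pred I) (F : I -> R) :
  (forall i, P i -> 0 <= F i) -> 0 <= \big[Rplus/0]_(i <- r | P i) F i.
Proof. by move=> F0; apply: (big_ind (fun x => 0 <= x)) => //; [lra | move=> *; lra]. Qed.

Lemma big_Rminus (I : Type) (r : seq I) (F G : I -> R) :
  \big[Rplus/0]_(i <- r) F i - \big[Rplus/0]_(i <- r) G i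
  = \big[Rplus/0]_(i <- r) (F i - G i).
Proof. elim: r => [|i r IH]; rewrite ?big_nil ?big_cons; lra. Qed.

Lemma iter_Rplus (c : R) k : iter k (Rplus c) 0 = INR k * c.
Proof. elim: k => [|k IH]; rewrite ?S_INR /= ?IH; lra. Qed.

Lemma iter_Rmult (c : R) k : iter k (Rmult c) 1 = c ^ k.
Proof. by elim: k => [|k IH] //=; rewrite IH. Qed.

Lemma big_const_R (T : finType) (A : {pred T}) (c : R) :
  \big[Rplus/0]_(t in A) c = INR #|A| * c.
Proof. by rewrite big_const iter_Rplus. Qed.

Lemma sum_const_R (T : finType) (c : R) :
  \big[Rplus/0]_(t : T) c = INR #|{: T}| * c.
Proof. exact: big_const_R. Qed.

Lemma card_R (T : finType) (A : {pred T}) :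
  INR #|A| = \big[Rplus/0]_(t : T) (if t \in A then 1 else 0).
Proof. by rewrite -big_mkcond big_const_R Rmult_1_r. Qed.

Lemma pow2_INR k : INR (2 ^ k)%N = 2 ^ k.
Proof. by elim: k => [|k IH] //; rewrite expnS mult_INR IH. Qed.

Lemma INR_card_ffun_bool (T : finType) : INR #|{: {ffun T -> bool}}| = 2 ^ #|{: T}|.
Proof. by rewrite card_ffun card_bool pow2_INR. Qed.

Lemma pboolT (P : Prop) : P -> pbool P = true.
Proof. by rewrite /pbool; case: excluded_middle_informative. Qed.

Lemma pboolF (P : Prop) : ~ P -> pbool P = false.
Proof. by rewrite /pbool; case: excluded_middle_informative. Qed.

Lemma Rabs_le_inv x t : Rabs x <= t -> - t <= x <= t.
Proof. by rewrite /Rabs; case: Rcase_abs => sign_x le_t; split; lra. Qed.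

Lemma Rlt_Rabs_inv x t : t < Rabs x -> t < x \/ x < - t.
Proof. by rewrite /Rabs; case: Rcase_abs => sign_x lt_t; [right | left]; lra. Qed.

Lemma Rmax_of_spec (S : R -> Prop) v :
  S v -> (forall z, S z -> z <= v) -> Rmax_of S = v.
Proof.
move=> Sv vmax; rewrite /Rmax_of.
have [Se Hmax] := epsilon_spec (inhabits 0) (fun w => S w /\ forall z, S z -> z <= w)
  (ex_intro _ v (conj Sv vmax)).
by have := vmax _ Se; have := Hmax _ Sv; lra.
Qed.

Lemma Rmin_of_spec (S : R -> Prop) v :
  S v -> (forall z, S z -> v <= z) -> Rmin_of S = v.
Proof.
move=> Sv vmin; rewrite /Rmin_of.
have [Se Hmin] := epsilon_spec (inhabits 0) (fun w => S w /\ forall z, S z -> w <= z)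
  (ex_intro _ v (conj Sv vmin)).
by have := vmin _ Se; have := Hmin _ Sv; lra.
Qed.

Lemma fin_argmax (T : finType) (x0 : T) (f : T -> R) : exists u, forall v, f v <= f u.
Proof.
suff [u Hu] : exists u, forall v, v \in enum T -> f v <= f u.
  by exists u => v; apply: Hu; rewrite mem_enum.
elim: (enum T) => [|t l [u IH]]; first by exists x0.
have [le_tu | lt_ut] := Rle_dec (f t) (f u).
  by exists u => v; rewrite inE => /orP [/eqP -> | /IH].
by exists t => v; rewrite inE => /orP [/eqP -> | /IH]; lra.
Qed.

(** * The McCormick gap at the centre *)

Definition centre (n : nat) : 'I_n -> R := fun _ => / 2.
Arguments centre n : clear implicits.

Definition nedges (n : nat) : R := INR #|{: edge n}|.

Lemma mcgap_centre n (s : signs n) : mcgap s (centre n) = nedges n / 2.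
Proof.
pose yhi (e : edge n) := if s e then / 2 else 0.
pose ylo (e : edge n) := if s e then 0 else / 2.
have box : inbox (centre n) by move=> i; rewrite /centre; lra.
rewrite /mcgap.
have -> : mcu s (centre n) = Rsum (enum {: edge n}) (fun e => coef s e * yhi e).
  apply: Rmax_of_spec.
    by split=> //; exists yhi; split=> // e; rewrite /yhi /centre; case: (s e); lra.
  move=> z [_ [y [Hy ->]]]; rewrite !Rsum_enum; apply: ler_big => e _.
  by have := Hy e; rewrite /yhi /coef /centre; case: (s e); lra.
have -> : mcl s (centre n) = Rsum (enum {: edge n}) (fun e => coef s e * ylo e).
  apply: Rmin_of_spec.
    by split=> //; exists ylo; split=> // e; rewrite /ylo /centre; case: (s e); lra.
  move=> z [_ [y [Hy ->]]]; rewrite !Rsum_enum; apply: ler_big => e _.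
  by have := Hy e; rewrite /ylo /coef /centre; case: (s e); lra.
rewrite !Rsum_enum big_Rminus (eq_bigr (fun _ => / 2)); first by rewrite big_const_R.
move=> e _; rewrite /coef /yhi /ylo; case: (s e); lra.
Qed.

(** * The convex hull gap at the centre *)

Definition bilc n (a : edge n -> R) (x : 'I_n -> R) : R :=
  \big[Rplus/0]_(e : edge n) (a e * x (val e).1 * x (val e).2).

Lemma bil_bilc n (s : signs n) x : bil s x = bilc (coef s) x.
Proof. by rewrite /bil Rsum_enum. Qed.

Definition update n (d : 'I_n -> R) k v : 'I_n -> R :=
  fun i => if i == k then v else d i.

Lemma update_id n (d : 'I_n -> R) k : update d k (d k) = d.
Proof. by apply: functional_extensionality => i; rewrite /update; case: eqP => [->|]. Qed.

Definition coord_affine n (f : ('I_n -> R) -> R) : Prop :=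
  forall d k, exists al be, forall v, f (update d k v) = al + be * v.

Lemma coord_affine_opp n (f : ('I_n -> R) -> R) :
  coord_affine f -> coord_affine (fun d => - f d).
Proof.
move=> f_aff d k; have [al [be E]] := f_aff d k.
by exists (- al), (- be) => v; rewrite E; ring.
Qed.

Lemma coord_affine_bilc n (a : edge n -> R) : coord_affine (bilc a).
Proof.
move=> d k; rewrite /bilc.
elim: (index_enum _) => [|e r [al [be IH]]].
  by exists 0, 0 => v; rewrite big_nil; lra.
have ne : (val e).1 != (val e).2 by rewrite neq_ltn (valP e).
have [a1 [b1 E]] : exists a1 b1, forall v,
    a e * update d k v (val e).1 * update d k v (val e).2 = a1 + b1 * v.
  rewrite /update; case: eqP => [E1|_]; case: eqP => [E2|_].
  - by move: ne; rewrite E1 E2 eqxx.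
  - by exists 0, (a e * d (val e).2) => v; ring.
  - by exists 0, (a e * d (val e).1) => v; ring.
  - by exists (a e * d (val e).1 * d (val e).2), 0 => v; ring.
by exists (a1 + al), (b1 + be) => v; rewrite big_cons E IH; ring.
Qed.

Definition in_half_box n (d : 'I_n -> R) : Prop := forall i, - / 2 <= d i <= / 2.

Definition corner n (u : {ffun 'I_n -> bool}) : 'I_n -> R :=
  fun i => if u i then / 2 else - / 2.

Lemma corner_in_half_box n (u : {ffun 'I_n -> bool}) : in_half_box (corner u).
Proof. by move=> i; rewrite /corner; case: (u i); lra. Qed.

(* Moving one coordinate at a time to the end of the box favoured by the slope. *)
Lemma corner_max n (f : ('I_n -> R) -> R) d :
  coord_affine f -> in_half_box d -> exists u, f d <= f (corner u).
Proof.
move=> f_aff d_box.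
have [d' [_ [d'_corner le_dd']]] : exists d', in_half_box d' /\
    (forall k, d' k = / 2 \/ d' k = - / 2) /\ f d <= f d'.
  suff push (l : seq 'I_n) : exists d', in_half_box d' /\
      {in l, forall k, d' k = / 2 \/ d' k = - / 2} /\ f d <= f d'.
    have [d' [d'_box [d'_enum le_dd']]] := push (enum 'I_n).
    exists d'; split=> //; split=> // k.
    by apply: d'_enum; rewrite mem_enum.
  elim: l => [|k l [d1 [d1_box [d1_l le_dd1]]]]; first by exists d; split=> //; split=> //; lra.
  have [al [be E]] := f_aff d1 k.
  have Ed1 : f d1 = al + be * d1 k by rewrite -E update_id.
  have [v [v_end le_v]] : exists v, (v = / 2 \/ v = - / 2) /\ be * d1 k <= be * v.
    have := d1_box k; case: (Rle_dec 0 be) => hbe hk;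
      [exists (/ 2) | exists (- / 2)]; split; auto; nra.
  exists (update d1 k v); split; [|split].
  - by move=> i; rewrite /update; case: eqP => _; [case: v_end => ->; lra | apply: d1_box].
  - move=> j; rewrite inE /update; case: eqP => [_ _ | _ /= /d1_l] //.
  - by rewrite E; lra.
exists [ffun i => pbool (d' i = / 2)].
suff -> : corner [ffun i => pbool (d' i = / 2)] = d' by [].
apply: functional_extensionality => i; rewrite /corner ffunE /pbool.
case: excluded_middle_informative => [E | ne] /=; first by rewrite E.
by case: (d'_corner i).
Qed.

Lemma corner_min n (f : ('I_n -> R) -> R) d :
  coord_affine f -> in_half_box d -> exists u, f (corner u) <= f d.
Proof.
by move=> /coord_affine_opp f_aff /(corner_max f_aff) [u le_u]; exists u; lra.
Qed.

Definition lin_part n (a : edge n -> R) (d : 'I_n -> R) : R :=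
  \big[Rplus/0]_(e : edge n) (a e * (d (val e).1 + d (val e).2) / 2).

Definition offset n (p : 'I_n -> R) : 'I_n -> R := fun i => p i - / 2.

Lemma inbox_offset n (p : 'I_n -> R) : inbox p <-> in_half_box (offset p).
Proof. by split=> p_box i; have := p_box i; rewrite /offset; lra. Qed.

Lemma bilc_centre_expand n (a : edge n -> R) p :
  bilc a p = bilc a (centre n) + lin_part a (offset p) + bilc a (offset p).
Proof.
rewrite /bilc /lin_part -!big_split; apply: eq_bigr => e _ /=.
rewrite /offset /centre; field.
Qed.

Lemma lin_partDZ n (a : edge n -> R) c f g :
  lin_part a (fun i => c * f i + g i) = c * lin_part a f + lin_part a g.
Proof. by rewrite /lin_part big_distrr -big_split; apply: eq_bigr => e _ /=; field. Qed.

Lemma lin_part0 n (a : edge n -> R) : lin_part a (fun _ => 0) = 0.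
Proof. by rewrite /lin_part big1 // => e _; lra. Qed.

Lemma lin_partN n (a : edge n -> R) d : lin_part a (fun i => - d i) = - lin_part a d.
Proof.
rewrite (_ : (fun i => - d i) = fun i => -1 * d i + 0).
  by rewrite lin_partDZ lin_part0; ring.
by apply: functional_extensionality => i; ring.
Qed.

Lemma bilcN n (a : edge n -> R) d : bilc a (fun i => - d i) = bilc a d.
Proof. by apply: eq_bigr => e _; ring. Qed.

Lemma Rsum_lin_part n (a : edge n -> R) (l : seq (R * ('I_n -> R))) :
  Rsum l (fun p => fst p * lin_part a (offset (snd p)))
  = lin_part a (fun i => Rsum l (fun p => fst p * offset (snd p) i)).
Proof. by elim: l => [|p l IH] /=; rewrite ?lin_part0 // IH lin_partDZ. Qed.

Lemma Rsum_bilc_centre n (a : edge n -> R) (l : seq (R * ('I_n -> R))) :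
  Rsum l fst = 1 -> (forall i, centre n i = Rsum l (fun p => fst p * snd p i)) ->
  Rsum l (fun p => fst p * bilc a (snd p))
  = bilc a (centre n) + Rsum l (fun p => fst p * bilc a (offset (snd p))).
Proof.
move=> sum1 mean.
have offset_mean i : Rsum l (fun p => fst p * offset (snd p) i) = 0.
  rewrite (eq_Rsum _ (g := fun p => fst p * snd p i + fst p * (- / 2))); last first.
    by move=> p; rewrite /offset; ring.
  by rewrite Rsum_add Rsum_mulr sum1 -mean /centre; ring.
rewrite (eq_Rsum _ (g := fun p => fst p * bilc a (centre n)
        + (fst p * lin_part a (offset (snd p)) + fst p * bilc a (offset (snd p))))).
  rewrite !Rsum_add Rsum_mulr sum1 Rsum_lin_part.
  by rewrite (_ : (fun i => _) = fun _ => 0) ?lin_part0;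
    [ring | apply: functional_extensionality].
by move=> p; rewrite bilc_centre_expand; ring.
Qed.

Section ConvexHullAtCentre.

Variables (n : nat) (s : signs n).
Local Notation a := (coef s).

Lemma in_convB_centre_bounds z lo hi :
  (forall d, in_half_box d -> lo <= bilc a d <= hi) ->
  in_convB s (centre n) z -> bilc a (centre n) + lo <= z <= bilc a (centre n) + hi.
Proof.
move=> bounds [l [l_box [sum1 [mean ->]]]].
rewrite (eq_Rsum _ (g := fun p => fst p * bilc a (snd p))); last by move=> p; rewrite bil_bilc.
rewrite Rsum_bilc_centre // -[lo]Rmult_1_l -[hi]Rmult_1_l -sum1 -!Rsum_mulr.
split; apply: Rplus_le_compat_l; apply: (ler_Rsum_Forall l_box) => p [w_ge0 p_box];
  by apply: Rmult_le_compat_l => //; case: (bounds _ (proj1 (inbox_offset _) p_box)).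
Qed.

(* The centre is the midpoint of the opposite box vertices [1/2 + corner u] and
   [1/2 - corner u], on which [b] takes the values [b(1/2) +- L(corner u) + b(corner u)]. *)
Lemma in_convB_centre_corner u :
  in_convB s (centre n) (bilc a (centre n) + bilc a (corner u)).
Proof.
pose p1 := fun i => / 2 + corner u i.
pose p2 := fun i => / 2 - corner u i.
have off1 : offset p1 = corner u.
  by apply: functional_extensionality => i; rewrite /offset /p1; ring.
have off2 : offset p2 = fun i => - corner u i.
  by apply: functional_extensionality => i; rewrite /offset /p2; ring.
exists [:: (/ 2, p1); (/ 2, p2)]; split; [|split; [|split]].
- have w_ge0 : 0 <= / 2 by lra.
  have p1_box : inbox p1 by apply/inbox_offset; rewrite off1; apply: corner_in_half_box.
  have p2_box : inbox p2.
    by apply/inbox_offset; rewrite off2 => i; have := corner_in_half_box u i; lra.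
  by constructor; [|constructor; [|constructor]].
- by rewrite /=; lra.
- by move=> i; rewrite /= /centre /p1 /p2; lra.
- rewrite /= !bil_bilc (bilc_centre_expand a p1) (bilc_centre_expand a p2).
  by rewrite off1 off2 lin_partN bilcN; lra.
Qed.

Lemma chgap_centre : exists umax umin,
  chgap s (centre n) = bilc a (corner umax) - bilc a (corner umin).
Proof.
have [umax max_u] := fin_argmax [ffun=> true] (fun u => bilc a (corner u)).
have [umin min_u] := fin_argmax [ffun=> true] (fun u => - bilc a (corner u)).
exists umax, umin; rewrite /chgap /cav /vex.
have bounds z : in_convB s (centre n) z ->
    bilc a (centre n) + bilc a (corner umin) <= z <= bilc a (centre n) + bilc a (corner umax).
  apply: in_convB_centre_bounds => d d_box.
  have [u1 le_u1] := corner_max (coord_affine_bilc a) d_box.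
  have [u2 le_u2] := corner_min (coord_affine_bilc a) d_box.
  by have := max_u u1; have := min_u u2; lra.
rewrite (Rmax_of_spec (in_convB_centre_corner umax) (fun z in_z => proj2 (bounds z in_z))).
rewrite (Rmin_of_spec (in_convB_centre_corner umin) (fun z in_z => proj1 (bounds z in_z))).
ring.
Qed.

End ConvexHullAtCentre.

(** * Sign patterns agreeing with a cut *)

Definition agree n (s : signs n) (g : edge n -> bool) : nat := #|[pred e | s e == g e]|.

Definition cut_pattern n (v : {ffun 'I_n -> bool} * bool) (e : edge n) : bool :=
  (v.1 (val e).1 == v.1 (val e).2) == v.2.

Lemma sum_agree n (s : signs n) g c d :
  \big[Rplus/0]_(e : edge n) (c * (if s e == g e then 1 else 0) + d)
  = c * INR (agree s g) + nedges n * d.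
Proof.
by rewrite big_split /= -big_distrr big_const_R /agree (card_R [pred e | s e == g e]).
Qed.

Lemma bilc_corner n (s : signs n) u :
  bilc (coef s) (corner u) = (2 * INR (agree s (cut_pattern (u, true))) - nedges n) / 4.
Proof.
rewrite /bilc (eq_bigr (fun e => / 2 * (if s e == cut_pattern (u, true) e then 1 else 0) - / 4)).
  by rewrite sum_agree; field.
move=> e _; rewrite /coef /corner /cut_pattern /=.
by case: (s e); case: (u (val e).1); case: (u (val e).2) => /=; lra.
Qed.

Lemma agree_cut_pattern_false n (s : signs n) u :
  INR (agree s (cut_pattern (u, false))) = nedges n - INR (agree s (cut_pattern (u, true))).
Proof.
have := sum_agree s (cut_pattern (u, false)) 1 0.
rewrite (eq_bigr (fun e => -1 * (if s e == cut_pattern (u, true) e then 1 else 0) + 1)).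
  by rewrite sum_agree; lra.
by move=> e _; rewrite /cut_pattern /=; case: (s e); case: (u _ == u _) => /=; lra.
Qed.

Lemma exp_INR_mul (x : R) k : exp (INR k * x) = exp x ^ k.
Proof.
elim: k => [|k IH]; first by rewrite Rmult_0_l exp_0.
by rewrite S_INR Rmult_plus_distr_r Rmult_1_l exp_plus IH /=; ring.
Qed.

(* Exponential Markov bound: weight each sign vector by [exp (lam * agree s g)];
   the total weight factorises over the edges. *)
Lemma card_agree_gt n (g : edge n -> bool) (lam K : R) : 0 < lam ->
  INR #|[pred s : signs n | pbool (K < INR (agree s g))]|
  <= (1 + exp lam) ^ #|{: edge n}| / exp (lam * K).
Proof.
move=> lam_gt0.
set w := fun s : signs n => \big[Rmult/1]_(e : edge n) (if s e == g e then exp lam else 1).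
have w_exp s : w s = exp (INR (agree s g) * lam).
  rewrite exp_INR_mul /w -big_mkcond /= /agree.
  by rewrite (eq_bigl (mem [pred e | s e == g e])) // big_const iter_Rmult.
have w_total : \big[Rplus/0]_(s : signs n) w s = (1 + exp lam) ^ #|{: edge n}|.
  rewrite /w -(bigA_distr_bigA (fun e b => if b == g e then exp lam else 1)).
  rewrite (eq_bigr (fun _ => 1 + exp lam)) ?big_const ?iter_Rmult //.
  by move=> e _; rewrite big_bool /=; case: (g e) => /=; lra.
have expK_gt0 := exp_pos (lam * K).
apply: (Rmult_le_reg_r (exp (lam * K))) => //.
rewrite /Rdiv Rmult_assoc Rinv_l; last lra.
rewrite Rmult_1_r -w_total -big_const_R big_mkcond /=; apply: ler_big => s _.
rewrite inE w_exp /pbool.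
case: excluded_middle_informative => [lt_K | _] /=; last exact/Rlt_le/exp_pos.
by apply/Rlt_le/exp_increasing; nra.
Qed.

(** * Probability of the bad event *)

(* Chosen so that [sqrt n * threshold n = nedges n = 2 * mcgap]. *)
Definition threshold (n : nat) : R := nedges n / sqrt (INR n).

Definition bad n (s : signs n) : Prop :=
  exists u, threshold n < Rabs (bilc (coef s) (corner u)).

Lemma centre_gap_ratio n (s : signs n) : (0 < n)%N -> ~ bad s ->
  mcgap s (centre n) >= sqrt (INR n) / 4 * chgap s (centre n).
Proof.
move=> n_gt0 not_bad.
have [umax [umin ->]] := chgap_centre s.
have small u : - threshold n <= bilc (coef s) (corner u) <= threshold n.
  by apply: Rabs_le_inv; apply: Rnot_lt_le => lt_t; apply: not_bad; exists u.
have sqrt_gt0 : 0 < sqrt (INR n) by apply: sqrt_lt_R0; apply: lt_0_INR; apply/ltP.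
have sqrt_t : sqrt (INR n) * threshold n = nedges n by rewrite /threshold; field; lra.
rewrite mcgap_centre -sqrt_t; apply: Rle_ge.
have [? ?] := small umax; have [? ?] := small umin.
apply: (Rle_trans _ (sqrt (INR n) / 4 * (2 * threshold n))); last lra.
by apply: Rmult_le_compat_l; lra.
Qed.

Lemma card_exists_le (S U : finType) (Q : U -> S -> Prop) :
  INR #|[pred x | pbool (exists u, Q u x)]|
  <= \big[Rplus/0]_(u : U) INR #|[pred x | pbool (Q u x)]|.
Proof.
under [X in _ <= X]eq_bigr do rewrite card_R.
rewrite card_R exchange_big /=; apply: ler_big => x _; rewrite inE.
have ind_ge0 u : 0 <= (if x \in [pred y | pbool (Q u y)] then 1 else 0).
  by case: ifP => _; lra.
have [[u Qu] | none] := excluded_middle_informative (exists u, Q u x); last first.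
  by rewrite pboolF //; apply: big_ge0 => v _; apply: ind_ge0.
rewrite pboolT; last by exists u.
rewrite (bigD1 u) //= inE pboolT //.
rewrite -{1}[1]Rplus_0_r; apply: Rplus_le_compat_l.
by apply: big_ge0 => v _; apply: ind_ge0.
Qed.

Lemma bad_cut_pattern n (s : signs n) : bad s ->
  exists v, nedges n / 2 + 2 * threshold n < INR (agree s (cut_pattern v)).
Proof.
move=> [u lt_t]; have := agree_cut_pattern_false s u.
rewrite bilc_corner in lt_t; case/Rlt_Rabs_inv: lt_t => [lt_t | lt_t] E.
- by exists (u, true); lra.
- by exists (u, false); lra.
Qed.

Lemma card_bad_le n (lam : R) : 0 < lam ->
  INR #|[pred s : signs n | pbool (bad s)]|
  <= 2 * 2 ^ n * ((1 + exp lam) ^ #|{: edge n}|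
                  / exp (lam * (nedges n / 2 + 2 * threshold n))).
Proof.
move=> lam_gt0.
set K := nedges n / 2 + 2 * threshold n.
apply: (Rle_trans _
  (INR #|[pred s : signs n | pbool (exists v, K < INR (agree s (cut_pattern v)))]|)).
  apply: le_INR; apply/leP; apply: subset_leq_card; apply/subsetP => s.
  rewrite !inE; have [/bad_cut_pattern ex_v | not_bad] := excluded_middle_informative (bad s).
    by rewrite (pboolT ex_v).
  by rewrite (pboolF not_bad).
apply: Rle_trans (card_exists_le _) _.
apply: (Rle_trans _ (\big[Rplus/0]_(v : {ffun 'I_n -> bool} * bool)
          ((1 + exp lam) ^ #|{: edge n}| / exp (lam * K)))).
  by apply: ler_big => v _; apply: card_agree_gt.
rewrite sum_const_R card_prod mult_INR INR_card_ffun_bool card_bool card_ord /=.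
by right; ring.
Qed.

Lemma prob_ge_compl n (P B : signs n -> Prop) : (forall s, ~ B s -> P s) ->
  1 - INR #|[pred s : signs n | pbool (B s)]| / INR #|{: signs n}| <= prob P <= 1.
Proof.
move=> notB_P.
have card_gt0 : 0 < INR #|{: signs n}| by rewrite INR_card_ffun_bool; apply: pow_lt; lra.
suff : INR #|{: signs n}| <= INR #|[set s | pbool (P s)]| + INR #|[pred s | pbool (B s)]| /\
       INR #|[set s | pbool (P s)]| <= INR #|{: signs n}|.
  rewrite /prob; move: (INR _) (INR _) (INR _) card_gt0 => b p c c_gt0 [le_PB le_P].
  split; apply: (Rmult_le_reg_r _ _ _ c_gt0).
    by rewrite Rmult_minus_distr_r /Rdiv !Rmult_assoc Rinv_l; lra.
  by rewrite /Rdiv Rmult_assoc Rinv_l; lra.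
split; last by apply: le_INR; apply/leP; apply: max_card.
rewrite (card_R [set s | pbool (P s)]) (card_R [pred s | pbool (B s)]) -big_split /=.
rewrite -[X in X <= _]Rmult_1_r -big_const_R; apply: ler_big => s _; rewrite !inE.
have [Bs | notB] := excluded_middle_informative (B s).
  by rewrite (pboolT Bs); case: (pbool (P s)); lra.
by rewrite (pboolT (notB_P s notB)); case: (pbool (B s)); lra.
Qed.

Lemma exp_le_exp x y : x <= y -> exp x <= exp y.
Proof. by case=> [lt_xy | ->]; [apply: Rlt_le; apply: exp_increasing | apply: Rle_refl]. Qed.

Lemma exp_le_inv_1_minus (l : R) : 0 <= l < 1 -> exp l <= / (1 - l).
Proof.
move=> [l_ge0 l_lt1]; rewrite -[l]Ropp_involutive exp_Ropp.
by apply: Rinv_le_contravar; have := exp_ineq1_le (- l); lra.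
Qed.

Lemma one_plus_exp_half_le (l : R) : 0 <= l < 1 ->
  (1 + exp l) / 2 <= exp (l / (2 * (1 - l))).
Proof.
move=> l_range; apply: Rle_trans (exp_ineq1_le _).
have -> : 1 + l / (2 * (1 - l)) = (1 + / (1 - l)) / 2 by field; lra.
by have := exp_le_inv_1_minus l_range; lra.
Qed.

Lemma nedges_complete n : 2 * nedges n = INR n * INR n - INR n.
Proof.
pose ind (P : pred ('I_n * 'I_n)) := \big[Rplus/0]_(p : 'I_n * 'I_n) (if P p then 1 else 0).
have nedges_lt : nedges n = ind (fun p => p.1 < p.2)%N.
  by rewrite /nedges card_sig card_R.
have lt_gt_sym : ind (fun p => p.1 < p.2)%N = ind (fun p => p.2 < p.1)%N.
  rewrite /ind (reindex_inj (h := fun p : 'I_n * 'I_n => (p.2, p.1))) //.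
  by move=> [i j] [k l] [-> ->].
have diag : ind (fun p => p.1 == p.2) = INR n.
  rewrite /ind -(pair_big xpredT xpredT (fun i j : 'I_n => if i == j then 1 else 0)) /=.
  rewrite (eq_bigr (fun _ => 1)) ?big_const_R ?card_ord; first lra.
  move=> i _; rewrite (bigD1 i) //= eqxx big1 ?Rplus_0_r // => j /negbTE.
  by rewrite eq_sym => ->.
have trichotomy :
    ind (fun p => p.1 < p.2)%N + ind (fun p => p.2 < p.1)%N + ind (fun p => p.1 == p.2)
    = INR n * INR n.
  rewrite /ind -!big_split (eq_bigr (fun _ => 1)) /=.
    by rewrite big_const_R card_prod card_ord mult_INR; lra.
  move=> [i j] _ /=; rewrite -[i == j]/(nat_of_ord i == nat_of_ord j).
  by case: (ltngtP i j) => _ /=; lra.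
lra.
Qed.

(* With [r = sqrt n], [lam = 2 / r] and [2 m = n (n - 1)], the Chernoff exponent
   simplifies to [(n - 1) (4 - r) / (r - 2)]. *)
Lemma chernoff_exponent (r m : R) : 16 <= r -> 2 * m = r * r * (r * r) - r * r ->
  m * ((2 / r) / (2 * (1 - 2 / r))) - (2 / r) * (m / 2 + 2 * (m / r))
  <= - (6 / 7) * (r * r - 1).
Proof.
move=> r_ge m_eq.
have -> : m * ((2 / r) / (2 * (1 - 2 / r))) - (2 / r) * (m / 2 + 2 * (m / r))
          = (r * r - 1) * ((4 - r) / (r - 2)).
  have -> : m = (r * r * (r * r) - r * r) / 2 by lra.
  by field; lra.
have ratio_le : (4 - r) / (r - 2) <= - (6 / 7).
  apply: (Rmult_le_reg_r (r - 2)); first lra.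
  by rewrite /Rdiv Rmult_assoc Rinv_l; lra.
have : 0 <= r * r - 1 by nra.
by nra.
Qed.

Lemma bad_fraction_chernoff n (lam : R) : 0 < lam < 1 ->
  INR #|[pred s : signs n | pbool (bad s)]| / INR #|{: signs n}|
  <= 2 * 2 ^ n * exp (nedges n * (lam / (2 * (1 - lam)))
                      - lam * (nedges n / 2 + 2 * threshold n)).
Proof.
move=> [lam_gt0 lam_lt1].
set m := #|{: edge n}|; set K := nedges n / 2 + 2 * threshold n.
have pow_le : ((1 + exp lam) / 2) ^ m <= exp (INR m * (lam / (2 * (1 - lam)))).
  rewrite exp_INR_mul; apply: pow_incr; split; last by apply: one_plus_exp_half_le; lra.
  by have := exp_pos lam; lra.
rewrite INR_card_ffun_bool -/m.
apply: Rle_trans (Rmult_le_compat_r _ _ _ _ (card_bad_le n lam_gt0)) _.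
  by apply: Rlt_le; apply: Rinv_0_lt_compat; apply: pow_lt; lra.
rewrite -/K /Rminus exp_plus exp_Ropp.
have -> : 2 * 2 ^ n * ((1 + exp lam) ^ m / exp (lam * K)) * / 2 ^ m
          = 2 * 2 ^ n * (((1 + exp lam) / 2) ^ m * / exp (lam * K)).
  by rewrite /Rdiv Rpow_mult_distr pow_inv; ring.
apply: Rmult_le_compat_l; first by have := pow_lt 2 n; lra.
by apply: Rmult_le_compat_r => //; apply/Rlt_le/Rinv_0_lt_compat/exp_pos.
Qed.

Lemma bad_fraction_le n : (256 <= n)%N ->
  INR #|[pred s : signs n | pbool (bad s)]| / INR #|{: signs n}|
  <= 2 * exp (6 / 7) * (2 * exp (- (6 / 7))) ^ n.
Proof.
move=> n_ge.
have n_ge' : 256 <= INR n by rewrite (_ : 256 = INR 256); [apply/le_INR/leP | rewrite /=; lra].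
set r := sqrt (INR n).
have rr : r * r = INR n by apply: sqrt_sqrt; lra.
have r_ge : 16 <= r by rewrite -(sqrt_square 16); [apply: sqrt_le_1_alt; lra | lra].
have lam_range : 0 < 2 / r < 1.
  split; first by apply: Rdiv_lt_0_compat; lra.
  by apply: (Rmult_lt_reg_r r); [lra | rewrite /Rdiv Rmult_assoc Rinv_l; lra].
apply: Rle_trans (bad_fraction_chernoff n lam_range) _.
have m_eq : 2 * nedges n = r * r * (r * r) - r * r by rewrite nedges_complete rr.
apply: Rle_trans (Rmult_le_compat_l _ _ _ _ (exp_le_exp (chernoff_exponent r_ge m_eq))) _.
  by have := pow_lt 2 n; lra.
rewrite rr Rpow_mult_distr -exp_INR_mul.
have -> : - (6 / 7) * (INR n - 1) = 6 / 7 + INR n * - (6 / 7) by ring.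
by rewrite exp_plus; right; ring.
Qed.

Lemma two_exp_lt1 : 0 < 2 * exp (- (6 / 7)) < 1.
Proof.
have sq : exp (6 / 7) = exp (3 / 7) * exp (3 / 7) by rewrite -exp_plus; congr exp; field.
have gt2 : 2 < exp (6 / 7) by rewrite sq; have := exp_ineq1_le (3 / 7); nra.
rewrite exp_Ropp; split; first by apply: Rmult_lt_0_compat; [lra | apply/Rinv_0_lt_compat; lra].
apply: (Rmult_lt_reg_r (exp (6 / 7))); first lra.
by rewrite Rmult_assoc Rinv_l; lra.
Qed.

Lemma bad_fraction_small eps : 0 < eps -> exists N, forall n, (N <= n)%N ->
  INR #|[pred s : signs n | pbool (bad s)]| / INR #|{: signs n}| < eps.
Proof.
move=> eps_gt0.
have [q_gt0 q_lt1] := two_exp_lt1.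
have C_gt0 : 0 < 2 * exp (6 / 7) by have := exp_pos (6 / 7); lra.
have [N small_q] : exists N, forall n, (n >= N)%coq_nat ->
    Rabs ((2 * exp (- (6 / 7))) ^ n) < eps / (2 * exp (6 / 7)).
  by apply: pow_lt_1_zero; [rewrite Rabs_pos_eq; lra | apply: Rdiv_lt_0_compat].
exists (maxn N 256) => n; rewrite geq_max => /andP [/leP n_ge_N n_ge].
apply: Rle_lt_trans (bad_fraction_le n_ge) _.
have := small_q n n_ge_N; rewrite Rabs_pos_eq => [lt_eps|]; last by apply: pow_le; lra.
have -> : eps = 2 * exp (6 / 7) * (eps / (2 * exp (6 / 7))) by field; lra.
exact: Rmult_lt_compat_l.
Qed.

Theorem theorem1 :
  Un_cv
    (fun n : nat =>
       prob (fun s : signs n =>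
               mcgap s (fun _ => / 2) >= sqrt (INR n) / 4 * chgap s (fun _ => / 2)))
    1.
Proof.
move=> eps eps_gt0.
have [N bad_small] := bad_fraction_small eps_gt0.
exists (maxn N 1) => n /leP; rewrite geq_max => /andP [n_ge_N n_gt0].
have [prob_ge prob_le] := prob_ge_compl (B := @bad n) (P := fun s : signs n =>
  mcgap s (fun _ => / 2) >= sqrt (INR n) / 4 * chgap s (fun _ => / 2))
  (fun s => centre_gap_ratio n_gt0).
have := bad_small n n_ge_N.
by rewrite /R_dist Rabs_left1; cbv beta; lra.
Qed.
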